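(* For every dyadic strip $D\in\mathcal D$ and every dyadic tree $T\in\mathcal T$, $$\mu(D)=\sigma(D)=|\pi(D)|,\qquad \nu(T)=\tau(T)=|\pi(T)|,$$ where $\pi$ is the projection onto the first coordinate and $|\cdot|$ is Lebesgue measure. Moreover, for every $T\in\mathcal T$, $\nu(T)=|\pi(T)|=|\pi(D(T))|=\mu(D(T))$, where $D(T)=\pi(T)\times(0,|\pi(T)|]\times\mathbb R\in\mathcal D$.
   Context: Dyadic intervals: $I(m,l)=(2^lm,2^l(m+1)]$. Tiles: $H(m,l,n)=I(m,l)\times(2^{l-1},2^l]\times I(n,-l)$. Strips $D(m,l)=I(m,l)\times(0,2^l]\times\mathbb R$ form $\mathcal D$, with $\sigma(D(m,l))=2^l$. Trees $T(m,l,n)=\bigcup_{l'\le l}\bigcup_{m':\,I(m',l')\subseteq I(m,l)}H(m',l',N(n,l'))$, with $N(n,l')$ the integer such that $I(n,-l)\subseteq I(N(n,l'),-l')$, form $\mathcal T$, with $\tau(T(m,l,n))=2^l$. On $X=\mathbb R\times(0,\infty)\times\mathbb R$, $\mu(A)=\inf\{\sum_{S\in\mathcal S'}\sigma(S):\mathcal S'\subseteq\mathcal D,\ A\subseteq\bigcup\mathcal S'\}$ and $\nu(A)=\inf\{\sum_{S\in\mathcal S'}\tau(S):\mathcal S'\subseteq\mathcal T,\ A\subseteq\bigcup\mathcal S'\}$. *)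

From HB Require Import structures.
From mathcomp Require Import all_boot all_order all_algebra.
From mathcomp Require Import all_classical all_reals all_analysis.
Set Implicit Arguments. Unset Strict Implicit. Unset Printing Implicit Defensive.
Import Order.TTheory GRing.Theory Num.Theory.
Local Open Scope classical_set_scope.
Local Open Scope ring_scope.

Section Dyadic.
Variable R : realType.

(* Points of X = R x (0,oo) x R are represented as triples ((x, xi), eta). *)
Definition pt := (R * R * R)%type.

Definition dI (m l : int) : set R :=
  [set x | (2 ^ l) * m%:~R < x /\ x <= (2 ^ l) * (m + 1)%:~R].

Definition tile (m l n : int) : set pt :=
  [set p | dI m l p.1.1 /\ (2 ^ (l - 1) < p.1.2 /\ p.1.2 <= 2 ^ l)
           /\ dI n (- l) p.2].

Definition strip (m l : int) : set pt :=
  [set p | dI m l p.1.1 /\ (0 < p.1.2 /\ p.1.2 <= 2 ^ l)].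

Definition sigma (i : int * int) : \bar R := ((2 : R) ^ i.2)%:E.

(* tree T(m,l,n): union over l' <= l, I(m',l') within I(m,l), of
   H(m', l', N(n,l')), where N(n,l') is the (unique) integer n' with
   I(n,-l) contained in I(n',-l'). *)
Definition tree (m l n : int) : set pt :=
  [set p | exists m' l' n', (l' <= l)%R /\ dI m' l' `<=` dI m l /\
     dI n (- l) `<=` dI n' (- l') /\ tile m' l' n' p].

Definition tau (i : int * int * int) : \bar R := ((2 : R) ^ i.1.2)%:E.

Definition mu (A : set pt) : \bar R :=
  ereal_inf [set (\esum_(i in S) sigma i)%E | S in
     [set S : set (int * int) | A `<=` \bigcup_(i in S) strip i.1 i.2]].

Definition nu (A : set pt) : \bar R :=
  ereal_inf [set (\esum_(i in S) tau i)%E | S in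
     [set S : set (int * int * int) | A `<=` \bigcup_(i in S) tree i.1.1 i.1.2 i.2]].

Definition proj1 (A : set pt) : set R := [set p.1.1 | p in A].

Definition leb (B : set R) : \bar R := lebesgue_measure B.

Definition stripOf (A : set pt) : set pt :=
  [set p : pt | proj1 A p.1.1 /\ (0 < p.1.2 /\ ((p.1.2)%:E <= leb (proj1 A))%E)].

End Dyadic.

(** Every strip [D(m,l)] and every tree [T(m,l,n)] contains the point
    [(2^l (m+1), 2^l, 2^-l (n+1))], at height [xi = 2^l].  A strip or tree
    containing a point of height [xi] has weight at least [xi], so every cover
    has total weight at least [2^l], while the single set itself is a cover of
    weight exactly [2^l].  Both projections are [I(m,l)], of length [2^l], and
    [D(T(m,l,n)) = D(m,l)]. *)

From HB Require Import structures.
From mathcomp Require Import all_boot all_order all_algebra.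
From mathcomp Require Import all_classical all_reals all_analysis.
Import Order.TTheory GRing.Theory Num.Theory.
Set Implicit Arguments. Unset Strict Implicit. Unset Printing Implicit Defensive.
Local Open Scope classical_set_scope.
Local Open Scope ring_scope.

Lemma esum_ge_term (R : realType) (I : choiceType) (S : set I)
    (w : I -> \bar R) i :
  S i -> (w i <= \esum_(j in S) w j)%E.
Proof.
move=> Si; apply: esum_ge; exists [set i]; last by rewrite fsbig_set1.
by split; [exact: finite_set1 | move=> j ->].
Qed.

Section CoverContent.
Variables (R : realType) (T : Type) (I : choiceType).
Variables (C : I -> set T) (w : I -> \bar R).
Hypothesis w_ge0 : forall i, (0 <= w i)%E.

Definition cover_content (A : set T) : \bar R :=
  ereal_inf [set (\esum_(i in S) w i)%E | S in
     [set S : set I | A `<=` \bigcup_(i in S) C i]].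

Lemma cover_content_le A i : A `<=` C i -> (cover_content A <= w i)%E.
Proof.
move=> AC; apply: ereal_inf_lbound; exists [set i]; last exact: esum_set1.
by move=> p /AC Cp; exists i.
Qed.

Lemma cover_content_ge A p c :
  A p -> (forall i, C i p -> (c <= w i)%E) -> (c <= cover_content A)%E.
Proof.
move=> Ap cw; apply: le_ereal_inf_tmp => _ [S AS <-].
have [i Si Cip] := AS _ Ap.
exact: le_trans (cw _ Cip) (esum_ge_term _ Si).
Qed.

Lemma cover_content_single A i p :
  A `<=` C i -> A p -> (forall j, C j p -> (w i <= w j)%E) ->
  cover_content A = w i.
Proof.
move=> AC Ap cw; apply/eqP; rewrite eq_le cover_content_le //=.
exact: cover_content_ge Ap cw.
Qed.

End CoverContent.

Section Dyadic.
Variable R : realType.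

Lemma exp2z_gt0 (l : int) : 0 < (2 : R) ^ l.
Proof. by rewrite exprz_gt0. Qed.

Lemma ler_exp2z (a b : int) : ((2 : R) ^ a <= 2 ^ b) = (a <= b).
Proof. by rewrite ler_eXz2l // ltr1n. Qed.

Lemma sigma_ge0 (i : int * int) : (0 <= sigma R i)%E.
Proof. by rewrite lee_fin ltW // exp2z_gt0. Qed.

Lemma tau_ge0 (i : int * int * int) : (0 <= tau R i)%E.
Proof. by rewrite lee_fin ltW // exp2z_gt0. Qed.

Lemma muE (A : set (pt R)) :
  mu A = cover_content (fun i : int * int => strip i.1 i.2) (sigma R) A.
Proof. by []. Qed.

Lemma nuE (A : set (pt R)) :
  nu A = cover_content (fun i : int * int * int => tree i.1.1 i.1.2 i.2) (tau R) A.
Proof. by []. Qed.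

Lemma dI_itv (m l : int) :
  dI m l = [set` `]((2 : R) ^ l * m%:~R), (2 ^ l * m%:~R + 2 ^ l)]%R].
Proof.
apply/seteqP; split => x /=; rewrite /dI in_itv /= intrD mulrDr mulr1.
  by move=> [-> ->].
by move=> /andP[-> ->].
Qed.

Lemma leb_dI (m l : int) : leb (dI m l) = ((2 : R) ^ l)%:E.
Proof.
rewrite /leb dI_itv lebesgue_measure_itv /= lte_fin ltrDl exp2z_gt0.
by rewrite -EFinD addrAC subrr add0r.
Qed.

Lemma dI_right (m l : int) : dI m l ((2 : R) ^ l * (m + 1)%:~R).
Proof. by split => //; rewrite ltr_pM2l ?exp2z_gt0 // ltr_int ltrDl. Qed.

Lemma tile_top (m l n : int) (x : R) :
  dI m l x -> tile m l n ((x, 2 ^ l), 2 ^ (- l) * (n + 1)%:~R).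
Proof.
move=> Ix; split => //; split; last exact: dI_right.
by rewrite ltr_eXz2l ?ltr1n // gtrBl.
Qed.

Lemma tile_sub_strip (m l n : int) : @tile R m l n `<=` strip m l.
Proof.
move=> p [Ip [[lt_p le_p] _]]; split => //.
by split => //; exact: lt_trans (exp2z_gt0 _) lt_p.
Qed.

Lemma tile_sub_tree (m l n : int) : @tile R m l n `<=` tree m l n.
Proof. by move=> p tp; exists m, l, n; do 3 split => //. Qed.

Lemma tree_sub_dI (m l n : int) (p : pt R) : tree m l n p -> dI m l p.1.1.
Proof. by move=> [m' [l' [n' [_ [sub [_ [Ip _]]]]]]]; exact: sub. Qed.

Lemma tree_height (m l n : int) (p : pt R) : tree m l n p -> p.1.2 <= 2 ^ l.
Proof.
move=> [m' [l' [n' [le_l [_ [_ [_ [[_ le_p] _]]]]]]]].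
by apply: le_trans le_p _; rewrite ler_exp2z.
Qed.

Lemma proj1_eq_dI (A : set (pt R)) (m l n : int) :
  tile m l n `<=` A -> (forall p, A p -> dI m l p.1.1) -> proj1 A = dI m l.
Proof.
move=> tA AI; apply/seteqP; split => x /=; first by move=> [p /AI + <-].
move=> Ix; exists ((x, 2 ^ l), 2 ^ (- l) * (n + 1)%:~R) => //.
exact/tA/tile_top.
Qed.

Lemma proj1_strip (m l : int) : proj1 (@strip R m l) = dI m l.
Proof. by apply: (proj1_eq_dI (n := 0)) => [|p []]; first exact: tile_sub_strip. Qed.

Lemma proj1_tree (m l n : int) : proj1 (@tree R m l n) = dI m l.
Proof. by apply: proj1_eq_dI (@tile_sub_tree _ _ _) _; exact: tree_sub_dI. Qed.

Lemma mu_strip (m l : int) : mu (@strip R m l) = ((2 : R) ^ l)%:E.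
Proof.
have top := tile_sub_strip (tile_top 0 (dI_right m l)).
rewrite muE; apply: (cover_content_single (i := (m, l)) sigma_ge0 _ top)
  => [//|j [_ [_ le_j]]].
by rewrite lee_fin.
Qed.

Lemma nu_tree (m l n : int) : nu (@tree R m l n) = ((2 : R) ^ l)%:E.
Proof.
have top := tile_sub_tree (tile_top n (dI_right m l)).
rewrite nuE; apply: (cover_content_single (i := (m, l, n)) tau_ge0 _ top)
  => [//|j /tree_height].
by rewrite lee_fin.
Qed.

Lemma stripOf_tree (m l n : int) : stripOf (@tree R m l n) = strip m l.
Proof.
rewrite /stripOf proj1_tree leb_dI; apply/seteqP; split => p /=.
  by move=> [Ip [gt_p le_p]]; do 2 split => //; rewrite -lee_fin.
by move=> [Ip [gt_p le_p]]; do 2 split => //; rewrite lee_fin.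
Qed.

End Dyadic.

Theorem lemma4p3 (R : realType) :
  (forall m l : int,
      mu (strip m l) = @sigma R (m, l) /\
      @sigma R (m, l) = leb (proj1 (@strip R m l))) /\
  (forall m l n : int,
      nu (tree m l n) = @tau R (m, l, n) /\
      @tau R (m, l, n) = leb (proj1 (@tree R m l n))) /\
  (forall m l n : int,
      (exists m' l' : int, stripOf (@tree R m l n) = strip m' l') /\
      nu (@tree R m l n) = leb (proj1 (@tree R m l n)) /\
      leb (proj1 (@tree R m l n)) = leb (proj1 (stripOf (@tree R m l n))) /\
      leb (proj1 (stripOf (@tree R m l n))) = mu (stripOf (@tree R m l n))).
Proof.
split; [|split].
- by move=> m l; rewrite mu_strip proj1_strip leb_dI.
- by move=> m l n; rewrite nu_tree proj1_tree leb_dI.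
- move=> m l n; rewrite stripOf_tree nu_tree proj1_tree proj1_strip leb_dI mu_strip.
  by split => //; exists m, l.
Qed.
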